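(* Let $G$ be a connected graph on $p\ge 6$ vertices that contains no copy of $T_6^1$. Then $e(G)\le 2p-3$.
   Context: All graphs are finite and simple; a graph ''contains'' $H$ if it has a subgraph isomorphic to $H$; $e(G)$ is the number of edges of $G$. $T_6^1$ is the tree on vertex set $\{v_0,\ldots,v_5\}$ with edges $v_0v_1,v_0v_2,v_0v_3,v_2v_4,v_3v_5$. *)

From mathcomp Require Import all_boot.
Set Implicit Arguments. Unset Strict Implicit. Unset Printing Implicit Defensive.

Definition simple_graph (V : finType) (adj : rel V) : Prop :=
  symmetric adj /\ irreflexive adj.

Definition edge_set (V : finType) (adj : rel V) : {set {set V}} :=
  [set E : {set V} | [exists x, exists y, adj x y && (E == [set x; y])]].

Definition num_edges (V : finType) (adj : rel V) : nat := #|edge_set adj|.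

Definition connected_graph (V : finType) (adj : rel V) : Prop :=
  forall x y : V, connect adj x y.

Definition T61_edges : seq (nat * nat) :=
  [:: (0, 1); (0, 2); (0, 3); (2, 4); (3, 5)].

Definition contains_T61 (V : finType) (adj : rel V) : Prop :=
  exists f : 'I_6 -> V, injective f /\
    forall i j : 'I_6, (nat_of_ord i, nat_of_ord j) \in T61_edges -> adj (f i) (f j).

From mathcomp Require Import all_boot zify.
From Stdlib Require Import Classical.
Set Implicit Arguments. Unset Strict Implicit. Unset Printing Implicit Defensive.

(* We prove the bound for every vertex set S of the graph that induces a
   connected subgraph G[S] with |S| >= 6, by induction on |S|.
   - Base case |S| = 6: an evaluation over all graphs on six labelled
     vertices (six_vertex_check) shows that 10 edges and no isolated vertex
     force a copy of T_6^1; six_vertex_bound transfers this to G[S].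
   - Step: removable_vertex finds u in S of degree at most 2 in G[S] with
     G[S - u] still connected, so e(S) <= e(S - u) + 2 (edges_in_delete).
   To find u, take a longest path x0 x1 ... xk of G[S].  Every neighbour of an
   endpoint lies on the path, so deleting an endpoint keeps G[S] connected.
   If all endpoints of longest paths had degree >= 3, then a chord from x0 to
   x4, or two chords from x0 beyond x1, would create T_6^1; hence N(x0) is
   exactly {x1, x2, x3}, and likewise for the starts of the longest paths
   x1 x0 x2 x3 ... and x2 x1 x0 x3 ...; a case analysis on k then yields a
   contradiction (section HighDegreeEndpoints). *)

Lemma path_first_entry (T : finType) (r : rel T) (B : pred T) a p :
  a \notin B -> path r a p -> last a p \in B ->
  exists d c, [/\ d \notin B, c \in B, r d c &
    connect [rel u v | [&& r u v, u \notin B & v \notin B]] a d].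
Proof.
elim: p a => [|c' p IH] a aB /=; first by rewrite (negbTE aB).
case/andP=> rac' c'p lastB; case: (boolP (c' \in B)) => c'B; first by exists a, c'.
have [d [c [dB cB rdc a_d]]] := IH c' c'B c'p lastB.
exists d, c; split => //; apply: connect_trans a_d; apply: connect1.
by rewrite /= rac' aB c'B.
Qed.

Lemma card_gt2_avoid (T : finType) (A : {set T}) a b :
  2 < #|A| -> exists2 z, z \in A & z \notin [:: a; b].
Proof.
move=> A_gt2; apply/exists_inP; rewrite -negb_forall_in; apply: contraTN A_gt2.
move=> /forall_inP A_ab; rewrite -leqNgt; apply: leq_trans (card_size [:: a; b]).
by apply/subset_leq_card/subsetP => z /A_ab.
Qed.

Lemma perm_rev_prefix (T : eqType) (s t : seq T) : perm_eq (s ++ t) (rev s ++ t).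
Proof. by rewrite perm_cat2r perm_sym perm_rev. Qed.

Fixpoint bool_seqs (n : nat) : seq (seq bool) :=
  if n is n'.+1 then
    [seq true :: l | l <- bool_seqs n'] ++ [seq false :: l | l <- bool_seqs n']
  else [:: [::]].

Lemma bool_seqsP n (l : seq bool) : size l = n -> l \in bool_seqs n.
Proof.
elim: n l => [|n IH] [|b l] //= [/IH l_n].
by rewrite mem_cat; case: b; rewrite map_f ?orbT.
Qed.

(* A sequence of 15 booleans codes a graph on {0,...,5}: one bit for each
   pair i < j, in lexicographic order. *)
Definition code_adj (l : seq bool) : nat -> nat -> bool :=
  if l is [:: b01; b02; b03; b04; b05; b12; b13; b14; b15; b23; b24; b25; b34; b35; b45]
  then fun i j => match i, j with
    | 0, 1 | 1, 0 => b01 | 0, 2 | 2, 0 => b02 | 0, 3 | 3, 0 => b03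
    | 0, 4 | 4, 0 => b04 | 0, 5 | 5, 0 => b05 | 1, 2 | 2, 1 => b12
    | 1, 3 | 3, 1 => b13 | 1, 4 | 4, 1 => b14 | 1, 5 | 5, 1 => b15
    | 2, 3 | 3, 2 => b23 | 2, 4 | 4, 2 => b24 | 2, 5 | 5, 2 => b25
    | 3, 4 | 4, 3 => b34 | 3, 5 | 5, 3 => b35 | 4, 5 | 5, 4 => b45
    | _, _ => false end
  else fun _ _ => false.

(* The 15 pairs i < j < 6, in the order used by code_adj. *)
Definition pairs6 : seq (nat * nat) :=
  [:: (0, 1); (0, 2); (0, 3); (0, 4); (0, 5); (1, 2); (1, 3); (1, 4); (1, 5);
      (2, 3); (2, 4); (2, 5); (3, 4); (3, 5); (4, 5)].

Lemma mem_pairs6 i j : i < j < 6 -> (i, j) \in pairs6.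
Proof. by case/andP; do 6?[case: i => [|i] //]; do 6?[case: j => [|j] //]. Qed.

Definition perms6 : seq (seq nat) := permutations (iota 0 6).

Definition embeds_T61 (l : seq bool) (pm : seq nat) : bool :=
  all (fun e => code_adj l (nth 0 pm e.1) (nth 0 pm e.2)) T61_edges.

Definition code_no_isolated (l : seq bool) : bool :=
  all (fun i => has (code_adj l i) (iota 0 6)) (iota 0 6).

(* The conditional is an 'if' rather
   than '==>' so that the embedding search only runs when it is needed. *)
Lemma six_vertex_check :
  all (fun l => if (9 < count id l) && code_no_isolated l
                then has (embeds_T61 l) perms6 else true)
      (bool_seqs 15).
Proof. vm_compute; reflexivity. Qed.

Section Graph.
Variables (V : finType) (adj : rel V).
Hypotheses (adj_sym : symmetric adj) (adj_irr : irreflexive adj).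

Lemma T61_of_vertices (z0 z1 z2 z3 z4 z5 : V) : uniq [:: z0; z1; z2; z3; z4; z5] ->
  adj z0 z1 -> adj z0 z2 -> adj z0 z3 -> adj z2 z4 -> adj z3 z5 -> contains_T61 adj.
Proof.
move=> z_uniq a01 a02 a03 a24 a35.
exists (fun i : 'I_6 => nth z0 [:: z0; z1; z2; z3; z4; z5] i); split.
  by move=> i j /eqP; rewrite nth_uniq // => /eqP /val_inj.
move=> [[|[|[|[|[|[|i]]]]]] Hi] [[|[|[|[|[|[|j]]]]]] Hj] //=; rewrite !inE //=.
Qed.

Lemma T61_of_indices x0 (w : seq V) a b c d e f : uniq w ->
  all (fun i => i < size w) [:: a; b; c; d; e; f] -> uniq [:: a; b; c; d; e; f] ->
  let W := nth x0 w in
  adj (W a) (W b) -> adj (W a) (W c) -> adj (W a) (W d) -> adj (W c) (W e) ->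
  adj (W d) (W f) -> contains_T61 adj.
Proof.
move=> w_uniq /allP idx_lt idx_uniq W; apply: T61_of_vertices.
rewrite -[[:: W a; _; _; _; _; _]]/(map W [:: a; b; c; d; e; f]) map_inj_in_uniq //.
by move=> i j /idx_lt i_lt /idx_lt j_lt /eqP; rewrite /W nth_uniq // => /eqP.
Qed.

Definition induced (S : {set V}) : rel V := [rel u v | [&& adj u v, u \in S & v \in S]].

Definition connected_in (S : {set V}) : Prop :=
  forall u v, u \in S -> v \in S -> connect (induced S) u v.

Definition spath (S : {set V}) (x : V) (s : seq V) : bool :=
  [&& path adj x s, uniq (x :: s) & all (mem S) (x :: s)].

Definition longest_spath (S : {set V}) (x : V) (s : seq V) : Prop :=
  spath S x s /\ forall y t, spath S y t -> size t <= size s.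

Lemma induced_sym (S : {set V}) : symmetric (induced S).
Proof. by move=> u v; rewrite /induced /= adj_sym (andbC (u \in S)). Qed.

Lemma induced_connect_sym (S : {set V}) : connect_sym (induced S).
Proof. exact/sym_connect_sym/induced_sym. Qed.

Lemma path_induced (S : {set V}) x p :
  all (mem S) (x :: p) -> path adj x p -> path (induced S) x p.
Proof.
elim: p x => [|y p IH] x //= /and3P [xS yS pS] /andP [axy p_path].
by rewrite /= {1}/induced /= axy xS yS IH //= yS.
Qed.

Lemma connected_nbr (S : {set V}) x :
  connected_in S -> x \in S -> 1 < #|S| -> exists2 y, y \in S & adj x y.
Proof.
move=> S_conn xS S_gt1.
have [z /andP [zx zS]] : exists z, (z != x) && (z \in S).
  apply/existsP; apply: contraTT S_gt1 => /existsPn S_x; rewrite -leqNgt.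
  rewrite -(cards1 x); apply/subset_leq_card/subsetP => v vS.
  by rewrite inE; move: (S_x v); rewrite vS andbT negbK.
have /connectP [[|c p] /= xp z_last] := S_conn x z xS zS; first by rewrite z_last eqxx in zx.
by case/andP: xp => /and3P [axc _ cS] _; exists c.
Qed.

(* Simple paths have fewer than |V| edges, so a longest one exists. *)
Lemma exists_longest_spath (S : {set V}) x : x \in S -> exists y t, longest_spath S y t.
Proof.
move=> xS.
have spath_lt y t : spath S y t -> size t < #|V|.
  case/and3P=> _ yt_uniq _; rewrite -[_ < _]/(size (y :: t) <= _) -(card_uniqP yt_uniq).
  exact: max_card.
suff longer n y t : #|V| - size t <= n -> spath S y t -> exists y t, longest_spath S y t.
  by apply: (longer #|V| x [::]); rewrite /spath /= ?subn0 ?xS.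
elim: n y t => [|n IH] y t t_size yt; first by have := spath_lt _ _ yt; lia.
case: (classic (forall y' t', spath S y' t' -> size t' <= size t)) => [max_t|].
  by exists y, t.
move=> /not_all_ex_not [y' /not_all_ex_not [t' not_le]].
have [yt' t_gt] := imply_to_and _ _ not_le.
apply: (IH y' t' _ yt').
by have := spath_lt _ _ yt'; move/negP: t_gt; lia.
Qed.

Lemma longest_spath_nbr (S : {set V}) x s z :
  longest_spath S x s -> z \in S -> adj x z -> z \in s.
Proof.
move=> [/and3P [xs_path xs_uniq xs_in] xs_max] zS axz; apply/negPn/negP => zs.
suff /xs_max : spath S z (x :: s) by rewrite ltnn.
apply/and3P; split; [by rewrite /= adj_sym axz | | by rewrite [all _ _]/= zS].
rewrite cons_uniq xs_uniq andbT inE negb_or zs andbT.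
by apply: contraTneq axz => ->; rewrite adj_irr.
Qed.

Lemma connected_edge_leaving (S : {set V}) (l : seq V) x :
  connected_in S -> x \in S -> x \in l -> size l < #|S| ->
  exists d c, [/\ d \in l, c \in S, c \notin l & adj d c].
Proof.
move=> S_conn xS xl l_small.
have [z zS zl] : exists2 z, z \in S & z \notin l.
  apply/exists_inP; rewrite -negb_forall_in; apply: contraTN l_small => /forall_inP Sl.
  rewrite -leqNgt; apply: leq_trans (card_size l); apply/subset_leq_card/subsetP => v.
  exact: Sl.
have /connectP [p xp z_last] := S_conn x z xS zS.
have x_in : x \notin [predC l] by rewrite inE negbK.
have z_out : last x p \in [predC l] by rewrite -z_last.
have [d [c [/negPn dl cl /and3P [adc _ cS] _]]] := path_first_entry x_in xp z_out.
by exists d, c.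
Qed.

Lemma spath_tail_connected (S : {set V}) x s c c' :
  spath S x s -> c \in s -> c' \in s -> connect (induced (S :\ x)) c c'.
Proof.
case: s => [|x1 s] // /and3P [/andP [_ s_path] /andP [xs _] xs_in].
have s_path' : path (induced (S :\ x)) x1 s.
  apply: path_induced s_path; apply/allP => v v_s.
  have vS : v \in S := allP xs_in v (@mem_behead _ (x :: _) v v_s).
  rewrite !inE vS andbT.
  by apply: contraNneq xs => <-.
have x1_conn := path_connect s_path'.
move=> /x1_conn c_x1 /x1_conn c'_x1; apply: connect_trans _ c'_x1.
by rewrite induced_connect_sym.
Qed.

(* Every vertex of S - x reaches s inside G[S - x] when x :: s is a longest
   path: its first entry into x :: s cannot be x, a neighbour of x being on
   the path. *)
Lemma longest_spath_reach (S : {set V}) x s a :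
  connected_in S -> longest_spath S x s -> a \in S :\ x ->
  exists2 c, c \in s & connect (induced (S :\ x)) a c.
Proof.
move=> S_conn xs_long; rewrite !inE => /andP [ax aS].
case: (boolP (a \in s)) => [a_s | a_ns]; first by exists a.
have [/and3P [_ /andP [xs _] /andP [xS _]] _] := xs_long.
have /connectP [p ap x_last] := S_conn a x aS xS.
have a_out : a \notin [predU pred1 x & mem s] by rewrite !inE negb_or ax.
have x_in : last a p \in [predU pred1 x & mem s] by rewrite -x_last !inE eqxx.
have [d [c [dB cB /and3P [adc dS cS] a_d]]] := path_first_entry a_out ap x_in.
move: dB cB; rewrite !inE negb_or => /andP [dx ds] /orP [/eqP cx | cs].
  by move: ds; rewrite (longest_spath_nbr xs_long dS) // adj_sym -cx.
exists c => //; apply: (connect_trans (y := d)).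
  apply: connect_sub a_d => u v /and3P [/and3P [auv uS vS]].
  rewrite !inE !negb_or => /andP [ux _] /andP [vx _].
  by apply: connect1; rewrite /induced /= !inE auv ux uS vx vS.
apply: connect1; rewrite /induced /= !inE adc dx dS cS !andbT /=.
by apply: contraNneq xs => <-.
Qed.

Lemma longest_spath_delete_connected (S : {set V}) x s :
  connected_in S -> longest_spath S x s -> connected_in (S :\ x).
Proof.
move=> S_conn xs_long a b aS bS.
have [ca ca_s a_ca] := longest_spath_reach S_conn xs_long aS.
have [cb cb_s b_cb] := longest_spath_reach S_conn xs_long bS.
apply: connect_trans a_ca _; apply: connect_trans (spath_tail_connected xs_long.1 ca_s cb_s) _.
by rewrite induced_connect_sym.
Qed.

Definition edges_in (S : {set V}) : nat := #|[set E in edge_set adj | E \subset S]|.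

Definition deg_in (S : {set V}) (x : V) : nat := #|[set y in S | adj x y]|.

Lemma edges_in_delete (S : {set V}) u :
  u \in S -> edges_in S <= edges_in (S :\ u) + deg_in S u.
Proof.
move=> uS; rewrite /edges_in /deg_in.
set N := [set y in S | adj u y].
suff sub : [set E in edge_set adj | E \subset S] \subset
    [set E in edge_set adj | E \subset S :\ u] :|: [set [set u; y] | y in N].
  apply: leq_trans (subset_leq_card sub) _; apply: leq_trans (leq_card_setU _ _) _.
  by rewrite leq_add2l leq_imset_card.
apply/subsetP => E; rewrite !inE => /andP [E_edge ES].
have /existsP [a /existsP [b /andP [aab /eqP E_ab]]] := E_edge.
have aS : a \in S by apply: (subsetP ES); rewrite E_ab !inE eqxx.
have bS : b \in S by apply: (subsetP ES); rewrite E_ab !inE eqxx orbT.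
case: (boolP (u \in E)) => uE.
  apply/orP; right; apply/imsetP; move: uE; rewrite E_ab !inE => /orP [/eqP ua | /eqP ub].
    by exists b; [rewrite inE bS ua aab | rewrite ua].
  by exists a; [rewrite inE aS ub adj_sym aab | rewrite ub setUC].
rewrite E_edge /=; apply/orP; left; apply/subsetP => z zE.
by rewrite !inE (subsetP ES _ zE) andbT; apply: contraNneq uE => <-.
Qed.

Ltac size_lia := simpl in *; (try (let k := fresh "k" in set (k := size _) in * )); lia.

Lemma T61_of_two_chords x s i j :
  uniq (x :: s) -> path adj x s -> 2 <= i < j -> 5 <= j -> j < size (x :: s) ->
  adj x (nth x (x :: s) i) -> adj x (nth x (x :: s) j) -> contains_T61 adj.
Proof.
move=> xs_uniq xs_path /andP [i_ge2 ij] j_ge5 j_lt ai aj.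
have [m def_j] : exists m, j = m.+2 by exists j.-2; lia.
subst j; rewrite /= in j_lt.
have step k : k < size s -> adj (nth x (x :: s) k) (nth x (x :: s) k.+1).
  by move=> k_lt; apply: (pathP x xs_path).
have step' k : k < size s -> adj (nth x (x :: s) k.+1) (nth x (x :: s) k).
  by move=> k_lt; rewrite adj_sym step.
have T61_at := T61_of_indices (x0 := x) xs_uniq.
(* The tree is centred at x; its leaves are reached through chords or path
   edges, depending on whether i is 2, j - 1 or neither. *)
have [i2 | i_ne2] := eqVneq i 2; last have [im | i_nem] := eqVneq i m.+1;
  [ move: ai; rewrite i2 => ai; apply: (T61_at 0 1 2 m.+2 3 m.+1)
  | move: ai; rewrite im => ai; apply: (T61_at 0 m.+2 1 m.+1 2 m)
  | apply: (T61_at 0 i 1 m.+2 2 m.+1) ];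
  first [ assumption | (apply: step; size_lia) | (apply: step'; size_lia)
        | (rewrite /= ?inE; size_lia) ].
Qed.

(* A chord from the start of a path to position 4 closes a 5-cycle; in a
   connected G[S] with |S| >= 6 some edge leaves it, giving T_6^1. *)
Lemma T61_of_pentagon (S : {set V}) x x1 x2 x3 x4 r :
  connected_in S -> 6 <= #|S| -> spath S x [:: x1, x2, x3, x4 & r] -> adj x x4 ->
  contains_T61 adj.
Proof.
move=> S_conn S_ge6 /and3P [xs_path xs_uniq /andP [xS _]] a04.
have /and5P [a01 a12 a23 a34 _] := xs_path.
have C_uniq : uniq [:: x; x1; x2; x3; x4].
  by move: xs_uniq; rewrite -[x :: _]/([:: x; x1; x2; x3; x4] ++ r) cat_uniq => /andP [].
have [d [c [dC _ cC adc]]] :=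
  connected_edge_leaving (l := [:: x; x1; x2; x3; x4]) S_conn xS (mem_head _ _) S_ge6.
have T61_at := T61_of_indices (x0 := c) (w := [:: c; x; x1; x2; x3; x4]).
have Cc_uniq : uniq [:: c; x; x1; x2; x3; x4] by rewrite cons_uniq C_uniq andbT.
move: dC; rewrite !inE => /or4P [| | | /orP []] /eqP d_eq; subst d.
- by apply: (T61_at 1 0 2 5 3 4); rewrite //= adj_sym.
- by apply: (T61_at 2 0 3 1 4 5); rewrite //= adj_sym.
- by apply: (T61_at 3 0 4 2 5 1); rewrite //= adj_sym.
- by apply: (T61_at 4 0 5 3 1 2); rewrite //= adj_sym.
- by apply: (T61_at 5 0 1 4 2 3); rewrite //= adj_sym.
Qed.

Hypothesis noT61 : ~ contains_T61 adj.

Lemma longest_spath_nbr_index (S : {set V}) x s z :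
  connected_in S -> 6 <= #|S| -> longest_spath S x s -> 2 < deg_in S x ->
  z \in S -> adj x z -> exists2 i, 0 < i <= 3 & z = nth x (x :: s) i.
Proof.
move=> S_conn S_ge6 xs_long deg_gt2 zS axz.
have [xs_spath _] := xs_long; have /and3P [xs_path xs_uniq _] := xs_spath.
have index_of y : y \in S -> adj x y -> exists2 i, 0 < i < size (x :: s) & y = nth x (x :: s) i.
  move=> yS axy; exists (index y s).+1; last by rewrite /= nth_index ?(longest_spath_nbr xs_long).
  by rewrite /= ltnS index_mem (longest_spath_nbr xs_long).
have [i /andP [i_gt0 i_lt] z_i] := index_of z zS axz.
exists i; rewrite // i_gt0 leqNgt; apply/negP => i_gt3; apply: noT61.
rewrite z_i in axz; have [i4 | i_ne4] := eqVneq i 4.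
  move: i_lt axz xs_spath; rewrite i4.
  case: s {xs_long xs_path xs_uniq index_of z_i} => [|x1 [|x2 [|x3 [|x4 r]]]] //= _ axz xs_spath.
  exact: T61_of_pentagon S_conn S_ge6 xs_spath axz.
have [z' /setIdP [z'S axz'] z'_new] := card_gt2_avoid (nth x (x :: s) 1) z deg_gt2.
have [j /andP [j_gt0 j_lt] z'_j] := index_of z' z'S axz'.
rewrite z'_j in axz'; move: z'_new; rewrite z'_j z_i !inE !negb_or.
move=> /andP [z'_ne1 z'_nei].
have j_ne1 : j != 1 by apply: contraNneq z'_ne1 => ->.
have j_nei : j != i by apply: contraNneq z'_nei => ->.
have [ji | ij] := ltnP j i.
  apply: (T61_of_two_chords xs_uniq xs_path _ _ i_lt axz' axz);
  by clear -ji i_gt3 i_ne4 j_gt0 j_ne1; lia.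
by apply: (T61_of_two_chords xs_uniq xs_path _ _ j_lt axz axz'); clear -ij i_gt3 i_ne4 j_nei; lia.
Qed.

Lemma longest_spath_endpoint (S : {set V}) x s :
  connected_in S -> 6 <= #|S| -> longest_spath S x s -> 2 < deg_in S x ->
  exists x1 x2 x3 r, [/\ s = [:: x1, x2, x3 & r], adj x x2, adj x x3 &
    forall z, z \in S -> adj x z -> z \in [:: x1; x2; x3]].
Proof.
move=> S_conn S_ge6 xs_long deg_gt2.
have nbr_index := longest_spath_nbr_index S_conn S_ge6 xs_long deg_gt2.
have s_ge3 : 3 <= size s.
  apply: leq_trans deg_gt2 (leq_trans _ (card_size s)); apply/subset_leq_card/subsetP.
  by move=> z /setIdP [zS axz]; apply: longest_spath_nbr xs_long zS axz.
case: s xs_long s_ge3 nbr_index => [|x1 [|x2 [|x3 r]]] // _ _ nbr_index.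
have nbrs z : z \in S -> adj x z -> z \in [:: x1; x2; x3].
  move=> zS /(nbr_index z zS) [[|[|[|[|i]]]] //= _ ->]; by rewrite !inE eqxx ?orbT.
have other_nbr a b : exists2 z, z \in [:: x1; x2; x3] & (z \notin [:: a; b]) && adj x z.
  have [z /setIdP [zS axz] z_ab] := card_gt2_avoid a b deg_gt2.
  by exists z; rewrite ?nbrs ?z_ab.
exists x1, x2, x3, r; split => //.
- have [z] := other_nbr x1 x3; rewrite !inE.
  by case/or3P=> /eqP ->; rewrite ?eqxx ?orbT //= => /andP [_ ->].
- have [z] := other_nbr x1 x2; rewrite !inE.
  by case/or3P=> /eqP ->; rewrite ?eqxx ?orbT //= => /andP [_ ->].
Qed.

Lemma longest_spath_perm (S : {set V}) x s y t :
  longest_spath S x s -> perm_eq (x :: s) (y :: t) -> path adj y t -> longest_spath S y t.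
Proof.
move=> [/and3P [_ xs_uniq xs_in] xs_max] xs_yt yt_path; split.
  by rewrite /spath yt_path -(perm_uniq xs_yt) -(perm_all _ xs_yt) xs_uniq xs_in.
by move=> z u /xs_max; have [<-] : (size s).+1 = (size t).+1 := perm_size xs_yt.
Qed.

Section HighDegreeEndpoints.
Variable S : {set V}.
Hypotheses (S_conn : connected_in S) (S_ge6 : 6 <= #|S|).
Hypothesis all_high : forall y t, longest_spath S y t -> 2 < deg_in S y.

Lemma endpoint_nbrs x x1 x2 x3 r : longest_spath S x [:: x1, x2, x3 & r] ->
  [/\ adj x x2, adj x x3 & forall z, z \in S -> adj x z -> z \in [:: x1; x2; x3]].
Proof.
move=> xs_long.
have [y1 [y2 [y3 [r' []]]]] :=
  longest_spath_endpoint S_conn S_ge6 xs_long (all_high xs_long).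
by case=> <- <- <- _.
Qed.

(* Applied to x1 x x2 x3 ... and x2 x1 x x3 ..., the first three vertices of
   a longest path have their neighbours among its first four vertices. *)
Lemma first_three_closed x x1 x2 x3 r :
  longest_spath S x [:: x1, x2, x3 & r] ->
  [/\ adj x1 x3, forall z, z \in S -> adj x1 z -> z \in [:: x; x2; x3]
   & forall z, z \in S -> adj x2 z -> z \in [:: x1; x; x3]].
Proof.
move=> xs_long; have [a02 a03 _] := endpoint_nbrs xs_long.
have /and3P [/and4P [a01 a12 a23 r_path] _ _] := xs_long.1.
have x1_long : longest_spath S x1 [:: x, x2, x3 & r].
  apply: longest_spath_perm xs_long (perm_rev_prefix [:: x; x1] _) _.
  by rewrite /= adj_sym a01 a02 a23.
have x2_long : longest_spath S x2 [:: x1, x, x3 & r].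
  apply: longest_spath_perm xs_long (perm_rev_prefix [:: x; x1; x2] _) _.
  by rewrite /= adj_sym a12 adj_sym a01 a03.
by have [_ a13 N1] := endpoint_nbrs x1_long; have [_ _ N2] := endpoint_nbrs x2_long.
Qed.

(* Four vertices: the only exit from {x, x1, x2, x3} would be at x3, and
   x3 x2 x1 x is a longest path too. *)
Lemma longest_spath_not3 x x1 x2 x3 : ~ longest_spath S x [:: x1; x2; x3].
Proof.
move=> xs_long; have [_ _ N0] := endpoint_nbrs xs_long.
have [_ N1 N2] := first_three_closed xs_long.
have /and3P [/and4P [a01 a12 a23 _] _ /andP [xS _]] := xs_long.1.
have x3_long : longest_spath S x3 [:: x2; x1; x].
  apply: longest_spath_perm xs_long (perm_rev_prefix [:: x; x1; x2; x3] [::]) _.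
  by rewrite /= adj_sym a23 adj_sym a12 adj_sym a01.
have [d [c [d_in cS /negP c_out adc]]] :=
  connected_edge_leaving (l := [:: x; x1; x2; x3]) S_conn xS (mem_head _ _) (ltnW S_ge6).
apply: c_out; move: d_in; rewrite !inE => /or4P [] /eqP d_eq; subst d.
- by have := N0 c cS adc; rewrite !inE => /or3P [] ->; rewrite ?orbT.
- by have := N1 c cS adc; rewrite !inE => /or3P [] ->; rewrite ?orbT.
- by have := N2 c cS adc; rewrite !inE => /or3P [] ->; rewrite ?orbT.
- by have := longest_spath_nbr x3_long cS adc; rewrite !inE => /or3P [] ->; rewrite ?orbT.
Qed.

(* Five vertices: the reversed path forces the chord x1 x4. *)
Lemma longest_spath_not4 x x1 x2 x3 x4 : ~ longest_spath S x [:: x1; x2; x3; x4].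
Proof.
move=> xs_long; have [_ N1 _] := first_three_closed xs_long.
have /and3P [/and5P [a01 a12 a23 a34 _] xs_uniq xs_in] := xs_long.1.
have x4_long : longest_spath S x4 [:: x3; x2; x1; x].
  apply: longest_spath_perm xs_long (perm_rev_prefix [:: x; x1; x2; x3; x4] [::]) _.
  by rewrite /= adj_sym a34 adj_sym a23 adj_sym a12 adj_sym a01.
have [_ a41 _] := endpoint_nbrs x4_long.
have x4S : x4 \in S by apply: (allP xs_in); rewrite !inE eqxx !orbT.
have x4_new : x4 \notin [:: x; x1; x2; x3].
  move: xs_uniq; rewrite -[[:: x; x1; x2; x3; x4]]/([:: x; x1; x2; x3] ++ [:: x4]).
  by rewrite cat_uniq /= orbF => /and3P [].
have x4_nbr : x4 \in [:: x; x2; x3] by apply: N1; rewrite // adj_sym.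
by move: x4_new x4_nbr; rewrite !inE => /negP x4_new /or3P [] x4_eq; rewrite x4_eq ?orbT in x4_new.
Qed.

(* Six or more vertices: T_6^1 centred at x3 with branches x1 x and x4 x5. *)
Lemma longest_spath_not_ge5 x x1 x2 x3 x4 x5 r :
  ~ longest_spath S x [:: x1, x2, x3, x4, x5 & r].
Proof.
move=> xs_long; have [a13 _ _] := first_three_closed xs_long.
have /and3P [/and5P [a01 a12 a23 a34 /andP [a45 _]] xs_uniq _] := xs_long.1.
apply: noT61; apply: (T61_of_indices (x0 := x) xs_uniq
  (a := 3) (b := 2) (c := 1) (d := 4) (e := 0) (f := 5)).
all: by rewrite //= adj_sym.
Qed.

Lemma all_high_absurd : False.
Proof.
have /card_gt0P [z zS] : 0 < #|S| by apply: leq_trans S_ge6.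
have [x [s xs_long]] := exists_longest_spath zS.
have [x1 [x2 [x3 [r [s_eq _ _ _]]]]] :=
  longest_spath_endpoint S_conn S_ge6 xs_long (all_high xs_long).
move: xs_long; rewrite {s}s_eq; case: r => [|x4 [|x5 r]].
- exact: longest_spath_not3.
- exact: longest_spath_not4.
- exact: longest_spath_not_ge5.
Qed.

End HighDegreeEndpoints.

Lemma removable_vertex (S : {set V}) :
  connected_in S -> 6 <= #|S| ->
  exists2 u, u \in S & deg_in S u <= 2 /\ connected_in (S :\ u).
Proof.
move=> S_conn S_ge6.
have [y [t [yt_long y_low]]] : exists y t, longest_spath S y t /\ deg_in S y <= 2.
  apply: NNPP => no_low; apply: (all_high_absurd S_conn S_ge6) => y t yt_long.
  by rewrite ltnNge; apply/negP => y_low; apply: no_low; exists y, t.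
exists y; first by case/and3P: yt_long.1 => _ _ /andP [].
by split; last exact: longest_spath_delete_connected S_conn yt_long.
Qed.

Section SixVertices.
Variables (y0 : V) (Y : seq V).
Hypotheses (Y_uniq : uniq Y) (Y_size : size Y = 6).
Let W := nth y0 Y.

Definition code6 : seq bool := [seq adj (W p.1) (W p.2) | p <- pairs6].

Lemma code6_adj i j : i < 6 -> j < 6 -> code_adj code6 i j = adj (W i) (W j).
Proof.
move=> i_lt j_lt; rewrite /code6 /W.
do 6?[case: i i_lt => [|i] i_lt //]; do 6?[case: j j_lt => [|j] j_lt //].
all: by rewrite /= ?adj_irr // adj_sym.
Qed.

Lemma code6_index y : y \in Y -> index y Y < 6 /\ W (index y Y) = y.
Proof. by move=> yY; rewrite -Y_size index_mem /W nth_index. Qed.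

Lemma edges_in_code6 (S : {set V}) : {subset S <= Y} -> edges_in S <= count id code6.
Proof.
move=> S_Y; rewrite /code6 count_map.
have -> : count (preim (fun p => adj (W p.1) (W p.2)) id) pairs6 =
    size [seq [set W p.1; W p.2] | p <- pairs6 & adj (W p.1) (W p.2)].
  by rewrite size_map size_filter.
apply: leq_trans (card_size _); apply/subset_leq_card/subsetP => E.
rewrite !inE => /andP [/existsP [a /existsP [b /andP [aab /eqP ->]]] abS].
have [i_lt Wi] := code6_index (S_Y a (subsetP abS a (set21 a b))).
have [j_lt Wj] := code6_index (S_Y b (subsetP abS b (set22 a b))).
set i := index a Y in i_lt Wi; set j := index b Y in j_lt Wj.
have [ij | ji | ij] := ltngtP i j.
- apply/mapP; exists (i, j); last by rewrite /= Wi Wj.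
  by rewrite mem_filter /= Wi Wj aab mem_pairs6 ?ij.
- apply/mapP; exists (j, i); last by rewrite /= Wi Wj setUC.
  by rewrite mem_filter /= Wi Wj adj_sym aab mem_pairs6 ?ji.
- by move: aab; rewrite -Wi -Wj ij adj_irr.
Qed.

Lemma code6_embeds pm : pm \in perms6 -> embeds_T61 code6 pm -> contains_T61 adj.
Proof.
rewrite mem_permutations => pm_perm /allP pm_edges.
have pm_uniq : uniq pm by rewrite (perm_uniq pm_perm) iota_uniq.
have pm_size : size pm = 6 by rewrite (perm_size pm_perm) size_iota.
have pm_lt i : i < 6 -> nth 0 pm i < 6.
  move=> i_lt; suff : nth 0 pm i \in iota 0 6 by rewrite mem_iota.
  by rewrite -(perm_mem pm_perm) mem_nth ?pm_size.
exists (fun i : 'I_6 => W (nth 0 pm i)); split.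
  move=> i j /eqP; rewrite /W nth_uniq ?Y_size ?pm_lt //.
  by rewrite nth_uniq ?pm_size // => /eqP /val_inj.
by move=> i j /pm_edges e_adj; rewrite -code6_adj ?pm_lt ?ltn_ord.
Qed.

End SixVertices.

Lemma six_vertex_bound (S : {set V}) : connected_in S -> #|S| = 6 -> edges_in S <= 9.
Proof.
move=> S_conn S6; have S_gt1 : 1 < #|S| by rewrite S6.
have /card_gt0P [y0 y0S] := ltnW S_gt1.
set Y := enum S; have Y_uniq : uniq Y := enum_uniq (mem S).
have Y_size : size Y = 6 by rewrite -S6 cardE.
have S_Y : {subset S <= Y} by move=> v; rewrite mem_enum.
rewrite leqNgt; apply/negP => many_edges; apply: noT61.
have no_isolated : code_no_isolated (code6 y0 Y).
  apply/allP => i; rewrite mem_iota => /andP [_ i_lt].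
  have WiS : nth y0 Y i \in S by rewrite -mem_enum mem_nth ?Y_size.
  have [y yS aWy] := connected_nbr S_conn WiS S_gt1.
  have [j_lt Wj] := code6_index y0 Y_size (S_Y y yS).
  by apply/hasP; exists (index y Y); rewrite ?mem_iota ?code6_adj ?Wj.
have code_size : size (code6 y0 Y) = 15 by rewrite size_map.
have := allP six_vertex_check _ (bool_seqsP code_size).
rewrite (leq_trans many_edges (edges_in_code6 y0 Y_size S_Y)) no_isolated.
by case/hasP=> pm pm_in; apply: (code6_embeds (y0 := y0) Y_uniq Y_size pm_in).
Qed.

Lemma edges_in_bound (S : {set V}) :
  connected_in S -> 6 <= #|S| -> edges_in S <= 2 * #|S| - 3.
Proof.
move Sn : #|S| => n; elim: n S Sn => [|n IH] S Sn S_conn n_ge6 //.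
have [n5 | n_ne5] := eqVneq n 5; first by rewrite n5 in Sn *; exact: six_vertex_bound.
have S_ge6 : 6 <= #|S| by rewrite Sn.
have [u uS [u_deg Su_conn]] := removable_vertex S_conn S_ge6.
have Su : #|S :\ u| = n by move: Sn; rewrite (cardsD1 u S) uS => -[].
have n_ge6' : 6 <= n by lia.
have := IH _ Su Su_conn n_ge6'; have := edges_in_delete uS; lia.
Qed.

End Graph.

Theorem lemma2p4 (V : finType) (adj : rel V) :
  simple_graph adj -> 6 <= #|V| -> connected_graph adj -> ~ contains_T61 adj ->
  num_edges adj <= 2 * #|V| - 3.
Proof.
move=> [adj_sym adj_irr] V_ge6 adj_conn noT61.
have -> : num_edges adj = edges_in adj [set: V].
  by apply: eq_card => E; rewrite !inE subsetT andbT.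
rewrite -cardsT; apply: edges_in_bound => //; last by rewrite cardsT.
have induced_all : induced adj [set: V] =2 adj.
  by move=> a b; rewrite /induced /= !inE !andbT.
by move=> x y _ _; rewrite (eq_connect induced_all).
Qed.
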